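(* Define the following equivalence relation on $SU(2)$: $g_1\approx g_2$ if there exist $(a_1,b_1,c_1),(a_2,b_2,c_2)$ such that $g_1=e^{-b_1p_2}e^{a_1p_1}e^{c_1p_2}$, $g_2=e^{-b_2p_2}e^{a_2p_1}e^{c_2p_2}$ and $a_1=a_2$, $b_1=b_2$, $c_1=c_2 \mod \pi$. Then the 3-D manifold $SU(2)/\approx$ is the lens space $L(4,1)$.
   Context: $SU(2)=\{\begin{pmatrix}\alpha&\beta\\-\bar\beta&\bar\alpha\end{pmatrix}\in \mathrm{Mat}(2,\mathbb{C}) : |\alpha|^2+|\beta|^2=1\}$, with Lie algebra basis $p_1=\frac12\begin{pmatrix}0&1\\-1&0\end{pmatrix}$, $p_2=\frac12\begin{pmatrix}0&i\\i&0\end{pmatrix}$, $k=\frac12\begin{pmatrix}i&0\\0&-i\end{pmatrix}$. Every $g\in SU(2)$ can be written as $g=e^{-bp_2}e^{ap_1}e^{cp_2}$ with $a\in[0,\pi]$, $b\in[0,2\pi)$, $c\in\mathbb{R}/(4\pi)$; $a$ is uniquely determined by $g$, and $b,c$ are uniquely determined when $a\neq 0,\pi$ (for $a=0$ only $c-b \mod 4\pi$ is determined, for $a=\pi$ only $c+b\mod 4\pi$). The lens space $L(p,q)$ ($p,q$ coprime nonzero integers) is $S^3/\sim$, where $S^3=\{(x_1,x_2)\in\mathbb{C}^2 : |x_1|^2+|x_2|^2=1\}$ and $(x_1,x_2)\sim(y_1,y_2)$ iff there is $\omega\in\mathbb{C}$ with $\omega^p=1$ and $x_1=\omega y_1$,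 $x_2=\omega^q y_2$. *)

From HB Require Import structures.
From mathcomp Require Import all_boot all_order all_algebra.
From mathcomp Require Import all_classical all_reals all_analysis.
From mathcomp Require Import complex.
Set Implicit Arguments. Unset Strict Implicit. Unset Printing Implicit Defensive.
Import Order.TTheory GRing.Theory Num.Theory.
Import numFieldNormedType.Exports.
Local Open Scope classical_set_scope.
Local Open Scope ring_scope.

(** We quotient by the equivalence closure of the relation; for relations
    that are already equivalence relations (as in the paper) this is the
    relation itself. *)
Section EqClosure.
Variable T : Type.
Variable r : T -> T -> Prop.

Definition eqclos (x y : T) : Prop :=
  forall E : T -> T -> Prop,
    (forall a, E a a) -> (forall a b, E a b -> E b a) ->
    (forall a b c, E a b -> E b c -> E a c) ->
    (forall a b, r a b -> E a b) -> E x y.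

Definition eqclosb : rel T := fun x y => `[< eqclos x y >].

Lemma eqclosb_refl : reflexive eqclosb.
Proof. by move=> x; apply/asboolP => E Er _ _ _. Qed.

Lemma eqclosb_sym : symmetric eqclosb.
Proof.
have H x y : eqclos x y -> eqclos y x.
  by move=> Hxy E Er Es Et Hr; exact: (Es _ _ (Hxy E Er Es Et Hr)).
move=> x y; rewrite /eqclosb.
by apply/idP/idP => /asboolP Hb; apply/asboolP; exact: H.
Qed.

Lemma eqclosb_trans : transitive eqclosb.
Proof.
move=> y x z /asboolP Hxy /asboolP Hyz; apply/asboolP => E Er Es Et Hr.
exact: (Et _ _ _ (Hxy E Er Es Et Hr) (Hyz E Er Es Et Hr)).
Qed.

Definition eqclos_equiv : equiv_rel T :=
  EquivRel eqclosb eqclosb_refl eqclosb_sym eqclosb_trans.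
End EqClosure.

Definition quot (X : topologicalType) (r : X -> X -> Prop) : topologicalType :=
  quotient_topology {eq_quot (eqclos_equiv r)}%qT.

Definition homeomorphic (X Y : topologicalType) : Prop :=
  exists (f : X -> Y) (g : Y -> X),
    [/\ cancel f g, cancel g f, continuous f & continuous g].

Section SU2.
Variable R : realType.
Local Open Scope complex_scope.

(** Points of C^2 are encoded by their real coordinates
    ((Re x1, Im x1), (Re x2, Im x2)), with the product topology of R^4. *)
Local Notation C2 := ((R * R) * (R * R))%type.

Definition cx1 (x : C2) : R[i] := Complex x.1.1 x.1.2.
Definition cx2 (x : C2) : R[i] := Complex x.2.1 x.2.2.

Definition sphere3 : set C2 :=
  [set x | x.1.1 ^+ 2 + x.1.2 ^+ 2 + x.2.1 ^+ 2 + x.2.2 ^+ 2 = 1].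
Local Notation S3 := (set_type sphere3).

(** SU(2) = { [[alpha, beta], [-conj beta, conj alpha]] : |alpha|^2+|beta|^2=1 }.
    A matrix of SU(2) is encoded by its first row (alpha, beta) in S^3; this
    identification (with the topology of Mat(2,C)) is a homeomorphism. *)
Local Notation SU2 := S3.

(** Multiplication of SU(2) matrices in the (alpha, beta) encoding:
    [[a,b],[-conj b,conj a]] [[c,d],[-conj d,conj c]] has first row (a c - b conj(d), a d + b conj(c)). *)
Definition su2_mul (g h : R[i] * R[i]) : R[i] * R[i] :=
  (g.1 * h.1 - g.2 * conjc h.2, g.1 * h.2 + g.2 * conjc h.1).

(** Matrix exponentials (closed forms, since (2 p1)^2 = (2 p2)^2 = -1):
    exp(t p1) = [[cos(t/2), sin(t/2)], [-sin(t/2), cos(t/2)]],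
    exp(t p2) = [[cos(t/2), i sin(t/2)], [i sin(t/2), cos(t/2)]]. *)
Definition exp_p1 (t : R) : R[i] * R[i] :=
  (Complex (cos (t / 2)) 0, Complex (sin (t / 2)) 0).
Definition exp_p2 (t : R) : R[i] * R[i] :=
  (Complex (cos (t / 2)) 0, Complex 0 (sin (t / 2))).

Definition euler (a b c : R) : R[i] * R[i] :=
  su2_mul (su2_mul (exp_p2 (- b)) (exp_p1 a)) (exp_p2 c).

Definition su2_coords (g : SU2) : R[i] * R[i] :=
  (cx1 (set_val g), cx2 (set_val g)).

(** Admissible Euler parameters: a in [0, pi], b in [0, 2 pi), c real
    (c is only meaningful modulo 4 pi, and euler is 4 pi-periodic in c). *)
Definition euler_param (a b c : R) : Prop :=
  0 <= a <= pi /\ 0 <= b < 2 * pi.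

Definition approx (g1 g2 : SU2) : Prop :=
  exists a1 b1 c1 a2 b2 c2 : R,
    [/\ euler_param a1 b1 c1, euler_param a2 b2 c2,
        su2_coords g1 = euler a1 b1 c1, su2_coords g2 = euler a2 b2 c2 &
        [/\ a1 = a2, b1 = b2 & exists k : int, c1 - c2 = k%:~R * pi]].

Definition lens_rel (p q : int) (x y : S3) : Prop :=
  exists w : R[i], w ^ p = 1 /\
    cx1 (set_val x) = w * cx1 (set_val y) /\
    cx2 (set_val x) = w ^ q * cx2 (set_val y).

Definition lens_space (p q : int) : topologicalType := quot (@lens_rel p q).

Definition SU2_mod_approx : topologicalType := quot approx.

End SU2.

(** Increasing c by π multiplies g = (α, β) on the right by e^{π p2}, i.e. maps it
    to (iβ, iα).  Since every g ∈ SU(2) has Euler angles, ≈ is the orbit relation of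
    this map, which has order 4.  The unitary change of coordinates
    (α, β) ↦ ((α + β)/√2, conj(α − β)/√2) of S³ conjugates it to the scalar
    multiplication (z1, z2) ↦ (i z1, i z2), whose orbits are the classes of L(4,1);
    a homeomorphism of S³ matching the two relations descends to the quotients. *)

From Pilot Require Import Defs.
From HB Require Import structures.
From mathcomp Require Import all_boot all_order all_algebra.
From mathcomp Require Import all_classical all_reals all_analysis.
From mathcomp Require Import complex.
From mathcomp Require Import ring lra.
Set Implicit Arguments. Unset Strict Implicit. Unset Printing Implicit Defensive.
Import Order.TTheory GRing.Theory Num.Theory.
Import numFieldNormedType.Exports.
Local Open Scope classical_set_scope.
Local Open Scope ring_scope.
Local Open Scope quotient_scope.

Lemma iter_conj (A B : Type) (f : A -> B) (g : A -> A) (h : B -> B) :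
  (forall x, f (g x) = h (f x)) -> forall n x, f (iter n g x) = iter n h (f x).
Proof. by move=> fgh; elim=> //= n IHn x; rewrite fgh IHn. Qed.

Section EquivalenceClosure.
Variables (T : Type) (r : T -> T -> Prop).

Lemma eqclos_refl x : eqclos r x x.
Proof. by move=> E Er. Qed.

Lemma eqclos_sym x y : eqclos r x y -> eqclos r y x.
Proof. by move=> rxy E Er Es Et Hr; exact/Es/(rxy E Er Es Et Hr). Qed.

Lemma eqclos_trans y x z : eqclos r x y -> eqclos r y z -> eqclos r x z.
Proof.
by move=> rxy ryz E Er Es Et Hr; exact: Et (rxy E Er Es Et Hr) (ryz E Er Es Et Hr).
Qed.

Lemma eqclos_of x y : r x y -> eqclos r x y.
Proof. by move=> rxy E Er Es Et Hr; exact: Hr. Qed.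

Lemma eqclos_iter (f : T -> T) :
  (forall x, r (f x) x) -> forall n x, eqclos r (iter n f x) x.
Proof.
move=> rf; elim=> [|n IHn] x /=; first exact: eqclos_refl.
exact: eqclos_trans (eqclos_of (rf _)) (IHn x).
Qed.

End EquivalenceClosure.

Lemma eqclos_map (T U : Type) (r : T -> T -> Prop) (s : U -> U -> Prop) (f : T -> U) :
  (forall x y, r x y -> eqclos s (f x) (f y)) ->
  forall x y, eqclos r x y -> eqclos s (f x) (f y).
Proof.
move=> rs x y rxy; apply: (rxy (fun a b => eqclos s (f a) (f b))) => //.
- by move=> a; exact: eqclos_refl.
- by move=> a b; exact: eqclos_sym.
- by move=> a b c; exact: eqclos_trans.
Qed.

Lemma quot_piP (X : topologicalType) (r : X -> X -> Prop) (x y : X) :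
  \pi_(quot r) x = \pi_(quot r) y <-> eqclos r x y.
Proof. by split=> [/eqquotP/asboolP | rxy]; last exact/eqquotP/asboolP. Qed.

Section QuotientMap.
Variables (X Y : topologicalType) (r : X -> X -> Prop) (s : Y -> Y -> Prop).

Definition quot_map (f : X -> Y) (q : quot r) : quot s := \pi_(quot s) (f (repr q)).

Variable f : X -> Y.
Hypothesis f_compat : forall x y, r x y -> eqclos s (f x) (f y).

Lemma eqclos_map_repr_pi x : eqclos s (f (repr (\pi_(quot r) x))) (f x).
Proof. by apply: (eqclos_map f_compat); apply/(quot_piP r); rewrite reprK. Qed.

Lemma continuous_quot_map : continuous f -> continuous (quot_map f).
Proof.
move=> cf; apply: (@repr_comp_continuous _ _ _ (\pi_(quot s) \o f)).
  by move=> x; apply: continuous_comp; [exact: cf | exact: pi_continuous].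
by move=> a b /eqP/(quot_piP r)/(eqclos_map f_compat)/(quot_piP s)/eqP.
Qed.

End QuotientMap.
Arguments quot_map {X Y} r s f q.

Lemma quot_mapK (X Y : topologicalType) (r : X -> X -> Prop) (s : Y -> Y -> Prop)
    (f : X -> Y) (g : Y -> X) :
  cancel f g -> (forall x y, s x y -> eqclos r (g x) (g y)) ->
  cancel (quot_map r s f) (quot_map s r g).
Proof.
move=> fK g_compat q; rewrite /quot_map -[RHS]reprK; apply/quot_piP.
by rewrite -[X in eqclos _ _ X]fK; exact: eqclos_map_repr_pi.
Qed.

Lemma homeomorphic_quot (X Y : topologicalType) (r : X -> X -> Prop)
    (s : Y -> Y -> Prop) (f : X -> Y) (g : Y -> X) :
  continuous f -> continuous g -> cancel f g -> cancel g f ->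
  (forall x y, r x y -> eqclos s (f x) (f y)) ->
  (forall x y, s x y -> eqclos r (g x) (g y)) ->
  homeomorphic (quot r) (quot s).
Proof.
move=> cf cg fK gK f_compat g_compat.
exists (quot_map r s f), (quot_map s r g); split.
- exact: quot_mapK.
- exact: quot_mapK.
- exact: continuous_quot_map.
- exact: continuous_quot_map.
Qed.

Section Sphere.
Variable R : realType.
Local Notation C2 := ((R * R) * (R * R))%type.
Local Notation S3 := (set_type (@sphere3 R)).

Definition sqnorm4 (x : C2) := x.1.1 ^+ 2 + x.1.2 ^+ 2 + x.2.1 ^+ 2 + x.2.2 ^+ 2.

Lemma sphere3P (x : S3) : sqnorm4 (set_val x) = 1.
Proof. exact: set_valP x. Qed.

Definition sphere_map (F : C2 -> C2) (HF : forall x, sqnorm4 (F x) = sqnorm4 x)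
  (x : S3) : S3 := exist _ (F (set_val x)) (mem_set (etrans (HF _) (sphere3P x))).

Lemma continuous_sphere_map F HF : continuous F -> continuous (@sphere_map F HF).
Proof.
move=> cF; apply: continuous_comp_initial.
have -> : set_val \o sphere_map HF = F \o set_val by [].
by move=> x; apply: continuous_comp; [exact: initial_continuous | exact: cF].
Qed.

Section Continuity.
Variable T : topologicalType.
Implicit Types f g : T -> R.

Lemma continuous_C2 f1 f2 f3 f4 :
  continuous f1 -> continuous f2 -> continuous f3 -> continuous f4 ->
  continuous (fun x => (((f1 x, f2 x), (f3 x, f4 x)) : C2)).
Proof.
move=> c1 c2 c3 c4 x.
apply: (@cvg_pair _ _ _ (nbhs x) (nbhs (f1 x, f2 x)) (nbhs (f3 x, f4 x))).
  exact: (@cvg_pair _ _ _ (nbhs x) (nbhs (f1 x)) (nbhs (f2 x)) _ _ _ f1 f2 (c1 x) (c2 x)).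
exact: (@cvg_pair _ _ _ (nbhs x) (nbhs (f3 x)) (nbhs (f4 x)) _ _ _ f3 f4 (c3 x) (c4 x)).
Qed.

Lemma continuous_scale (k : R) f : continuous f -> continuous (fun x => k * f x).
Proof. by move=> cf x; apply: continuousM; [exact: cvg_cst | exact: cf]. Qed.

Lemma continuous_add f g : continuous f -> continuous g -> continuous (fun x => f x + g x).
Proof. by move=> cf cg x; exact: (@continuousD R R^o T f g x (cf x) (cg x)). Qed.

Lemma continuous_sub f g : continuous f -> continuous g -> continuous (fun x => f x - g x).
Proof. by move=> cf cg x; exact: (@continuousB R R^o T f g x (cf x) (cg x)). Qed.

End Continuity.

Lemma continuous_x11 : continuous (fun x : C2 => x.1.1).
Proof. by move=> x; apply: (@cvg_comp _ _ _ fst fst); exact: cvg_fst. Qed.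
Lemma continuous_x12 : continuous (fun x : C2 => x.1.2).
Proof. by move=> x; apply: (@cvg_comp _ _ _ fst snd); [exact: cvg_fst | exact: cvg_snd]. Qed.
Lemma continuous_x21 : continuous (fun x : C2 => x.2.1).
Proof. by move=> x; apply: (@cvg_comp _ _ _ snd fst); [exact: cvg_snd | exact: cvg_fst]. Qed.
Lemma continuous_x22 : continuous (fun x : C2 => x.2.2).
Proof. by move=> x; apply: (@cvg_comp _ _ _ snd snd); exact: cvg_snd. Qed.

Definition inv_sqrt2 : R := Num.sqrt 2^-1.
Local Notation s := inv_sqrt2.

Lemma inv_sqrt2_sq : s ^+ 2 = 2^-1.
Proof. by rewrite sqr_sqrtr // invr_ge0. Qed.

(* In complex coordinates, (α, β) ↦ ((α + β)/√2, conj(α − β)/√2). *)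
Definition to_lens (x : C2) : C2 :=
  ((s * (x.1.1 + x.2.1), s * (x.1.2 + x.2.2)), (s * (x.1.1 - x.2.1), s * (x.2.2 - x.1.2))).
Definition of_lens (z : C2) : C2 :=
  ((s * (z.1.1 + z.2.1), s * (z.1.2 - z.2.2)), (s * (z.1.1 - z.2.1), s * (z.1.2 + z.2.2))).

Lemma sqnorm4_to_lens x : sqnorm4 (to_lens x) = sqnorm4 x.
Proof.
transitivity (s ^+ 2 * 2 * sqnorm4 x); first by rewrite /sqnorm4 /=; ring.
by rewrite inv_sqrt2_sq mulVf ?mul1r ?pnatr_eq0.
Qed.

Lemma sqnorm4_of_lens z : sqnorm4 (of_lens z) = sqnorm4 z.
Proof.
transitivity (s ^+ 2 * 2 * sqnorm4 z); first by rewrite /sqnorm4 /=; ring.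
by rewrite inv_sqrt2_sq mulVf ?mul1r ?pnatr_eq0.
Qed.

Lemma to_lensK : cancel to_lens of_lens.
Proof.
case=> [[a b] [c d]]; rewrite /to_lens /of_lens /=.
congr ((_, _), (_, _));
  by rewrite ?(mulrDr, mulrBr, mulrA, mulrN) -?expr2 ?inv_sqrt2_sq; field.
Qed.

Lemma of_lensK : cancel of_lens to_lens.
Proof.
case=> [[a b] [c d]]; rewrite /to_lens /of_lens /=.
congr ((_, _), (_, _));
  by rewrite ?(mulrDr, mulrBr, mulrA, mulrN) -?expr2 ?inv_sqrt2_sq; field.
Qed.

Ltac continuous_linear :=
  apply: continuous_C2; apply: continuous_scale;
  first [apply: continuous_sub | apply: continuous_add];
  first [exact: continuous_x11 | exact: continuous_x12
        | exact: continuous_x21 | exact: continuous_x22].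

Lemma continuous_to_lens : continuous to_lens.
Proof. continuous_linear. Qed.

Lemma continuous_of_lens : continuous of_lens.
Proof. continuous_linear. Qed.

(* (α, β) ↦ (iβ, iα), the right multiplication by e^{π p2} = [[0, i], [i, 0]]. *)
Definition shift_pi (x : C2) : C2 := ((- x.2.2, x.2.1), (- x.1.2, x.1.1)).
Definition mul_i (z : C2) : C2 := ((- z.1.2, z.1.1), (- z.2.2, z.2.1)).

Lemma to_lens_shift_pi x : to_lens (shift_pi x) = mul_i (to_lens x).
Proof. by rewrite /to_lens /mul_i /=; congr ((_, _), (_, _)); ring. Qed.

Lemma of_lens_mul_i z : of_lens (mul_i z) = shift_pi (of_lens z).
Proof. by rewrite /of_lens /shift_pi /=; congr ((_, _), (_, _)); ring. Qed.

Lemma sqnorm4_shift_pi x : sqnorm4 (shift_pi x) = sqnorm4 x.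
Proof. by rewrite /sqnorm4 /=; ring. Qed.

Lemma sqnorm4_mul_i z : sqnorm4 (mul_i z) = sqnorm4 z.
Proof. by rewrite /sqnorm4 /=; ring. Qed.

Definition to_lensS : S3 -> S3 := sphere_map sqnorm4_to_lens.
Definition of_lensS : S3 -> S3 := sphere_map sqnorm4_of_lens.
Definition shift_piS : S3 -> S3 := sphere_map sqnorm4_shift_pi.
Definition mul_iS : S3 -> S3 := sphere_map sqnorm4_mul_i.

Lemma to_lensSK : cancel to_lensS of_lensS.
Proof. by move=> x; apply: val_inj; rewrite /= to_lensK. Qed.

Lemma of_lensSK : cancel of_lensS to_lensS.
Proof. by move=> z; apply: val_inj; rewrite /= of_lensK. Qed.

Lemma to_lensS_shift_pi x : to_lensS (shift_piS x) = mul_iS (to_lensS x).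
Proof. by apply: val_inj; rewrite /= to_lens_shift_pi. Qed.

Lemma of_lensS_mul_i z : of_lensS (mul_iS z) = shift_piS (of_lensS z).
Proof. by apply: val_inj; rewrite /= of_lens_mul_i. Qed.

Lemma continuous_to_lensS : continuous to_lensS.
Proof. exact/continuous_sphere_map/continuous_to_lens. Qed.

Lemma continuous_of_lensS : continuous of_lensS.
Proof. exact/continuous_sphere_map/continuous_of_lens. Qed.

Local Open Scope complex_scope.

Lemma complexP (z w : R[i]) :
  complex.Re z = complex.Re w -> complex.Im z = complex.Im w -> z = w.
Proof. by case: z w => [a b] [c d] /= -> ->. Qed.

Lemma expi2 : 'i ^+ 2 = -1 :> R[i].
Proof. by apply: complexP => /=; ring. Qed.

Lemma expi4 : 'i ^+ 4 = 1 :> R[i].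
Proof. by rewrite (_ : 4 = 2 * 2)%N // exprM expi2 sqrrN expr1n. Qed.

Lemma root4_unity_expi (w : R[i]) : w ^+ 4 = 1 -> exists n : nat, w = 'i ^+ n.
Proof.
move=> w4.
have : (w - 1) * (w + 1) * (w - 'i) * (w + 'i) = 0.
  transitivity (w ^+ 4 - (1 + 'i ^+ 2) * w ^+ 2 + 'i ^+ 2); first by ring.
  by rewrite w4 expi2; ring.
move/eqP; rewrite !mulf_eq0 -!orbA => /or4P[].
- by rewrite subr_eq0 => /eqP ->; exists 0%N.
- by rewrite addr_eq0 => /eqP ->; exists 2%N; rewrite expi2.
- by rewrite subr_eq0 => /eqP ->; exists 1%N; rewrite expr1.
- by rewrite addr_eq0 => /eqP ->; exists 3%N; rewrite exprS expi2 mulrN1.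
Qed.

Lemma cx_inj (x y : C2) : cx1 x = cx1 y -> cx2 x = cx2 y -> x = y.
Proof. by case: x y => [[? ?] [? ?]] [[? ?] [? ?]] [-> ->] [-> ->]. Qed.

Lemma cx1_iter_mul_i n z : cx1 (iter n mul_i z) = 'i ^+ n * cx1 z.
Proof.
elim: n => [|n IHn] /=; first by rewrite mul1r.
by rewrite exprS -mulrA -IHn; apply: complexP => /=; ring.
Qed.

Lemma cx2_iter_mul_i n z : cx2 (iter n mul_i z) = 'i ^+ n * cx2 z.
Proof.
elim: n => [|n IHn] /=; first by rewrite mul1r.
by rewrite exprS -mulrA -IHn; apply: complexP => /=; ring.
Qed.

Lemma val_iter_mul_iS n z : set_val (iter n mul_iS z) = iter n mul_i (set_val z).
Proof. exact: iter_conj. Qed.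

Lemma lens_rel_iter_mul_iS n (z : S3) : lens_rel 4 1 (iter n mul_iS z) z.
Proof.
exists ('i ^+ n); split; last split.
- by rewrite (_ : ('i ^+ n) ^ 4%:Z = ('i ^+ n) ^+ 4) // -exprM mulnC exprM expi4 expr1n.
- by rewrite val_iter_mul_iS cx1_iter_mul_i.
- by rewrite (_ : ('i ^+ n) ^ 1%:Z = 'i ^+ n) // val_iter_mul_iS cx2_iter_mul_i.
Qed.

Lemma lens_relP (u v : S3) : lens_rel 4 1 u v -> exists n, u = iter n mul_iS v.
Proof.
case=> w [w4 [e1 e2]]; have [n wn] := root4_unity_expi w4.
exists n; apply: val_inj; change (set_val u = set_val (iter n mul_iS v)).
rewrite val_iter_mul_iS; apply: cx_inj; first by rewrite cx1_iter_mul_i -wn.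
by rewrite cx2_iter_mul_i -wn e2.
Qed.

Definition shift_pi_coords (p : R[i] * R[i]) : R[i] * R[i] := ('i * p.2, 'i * p.1).

Lemma su2_coords_inj : injective (@su2_coords R).
Proof. by move=> x y e; apply/val_inj/(cx_inj (f_equal fst e) (f_equal snd e)). Qed.

Lemma su2_coords_shift_piS x :
  su2_coords (shift_piS x) = shift_pi_coords (su2_coords x).
Proof. by rewrite /su2_coords /=; congr (_, _); apply: complexP => /=; ring. Qed.

Lemma euler_shift_pi a b c : euler a b (c + pi) = shift_pi_coords (euler a b c).
Proof.
rewrite /euler; set P := su2_mul _ (exp_p1 a); case: P => [[p1 p2] [q1 q2]].
rewrite /exp_p2 mulrDl cosDpihalf sinDpihalf /su2_mul /shift_pi_coords /=.
by congr (_, _); apply: complexP => /=; ring.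
Qed.

Lemma euler_shift_npi n a b c :
  euler a b (c + n%:R * pi) = iter n shift_pi_coords (euler a b c).
Proof.
elim: n => [|n IHn]; first by rewrite mul0r addr0.
by rewrite -addn1 natrD mulrDl mul1r addrA euler_shift_pi IHn addn1.
Qed.

Lemma polar_coords (x y r : R) : 0 <= r -> x ^+ 2 + y ^+ 2 = r ^+ 2 ->
  exists t, -pi <= t <= pi /\ x = r * cos t /\ y = r * sin t.
Proof.
move=> r0 h; have pi0 := pi_ge0 R.
have [r00|rn0] := eqVneq r 0.
  have [x0 y0] : x = 0 /\ y = 0.
    move: h; rewrite r00 expr0n /= => h.
    by split; apply/eqP; rewrite -sqrf_eq0; apply/eqP;
      have := sqr_ge0 x; have := sqr_ge0 y; lra.
  by exists 0; rewrite x0 y0 r00 !mul0r; split => //; lra.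
have rp : 0 < r by rewrite lt0r rn0.
set u := x / r.
have hu : -1 <= u <= 1.
  have hxr : - r <= x <= r by apply/andP; split; nra.
  by rewrite /u ler_pdivlMr // ler_pdivrMr // mulN1r mul1r.
have [/andP [t0 t1] ct] := acos_def hu.
have st : sin (acos u) = `|y / r|.
  rewrite sin_acos // -sqrtr_sqr; congr Num.sqrt.
  apply/eqP; rewrite -subr_eq0 /u.
  have -> : 1 - (x / r) ^+ 2 - (y / r) ^+ 2 = (r ^+ 2 - (x ^+ 2 + y ^+ 2)) / r ^+ 2.
    by field.
  by rewrite h subrr mul0r.
have [y0|y0] := leP 0 y.
  exists (acos u); split; first by apply/andP; split; lra.
  split; first by rewrite ct /u mulrC divfK.
  by rewrite st ger0_norm ?divr_ge0 // mulrC divfK.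
exists (- acos u); split; first by apply/andP; split; lra.
split; first by rewrite cosN ct /u mulrC divfK.
have yr : y / r < 0 by rewrite ltr_pdivrMr // mul0r.
by rewrite sinN st ltr0_norm // opprK mulrC divfK.
Qed.

Lemma cos_sin_first_quadrant (A B : R) : 0 <= A -> 0 <= B -> A ^+ 2 + B ^+ 2 = 1 ->
  exists t, 0 <= t <= pi / 2 /\ cos t = A /\ sin t = B.
Proof.
move=> A0 B0 h; have pi0 := pi_ge0 R.
have hA : -1 <= A <= 1 by apply/andP; split; nra.
have hB : -1 <= B <= 1 by apply/andP; split; nra.
have [/andP [t0 t1] ct] := acos_def hA.
have [/andP [s0 s1] st] := asin_def hB.
have cs : cos (asin B) = A.
  by rewrite cos_asin // (_ : 1 - B ^+ 2 = A ^+ 2) ?sqrtr_sqr ?ger0_norm //; lra.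
have ss : sin (acos A) = B.
  by rewrite sin_acos // (_ : 1 - A ^+ 2 = B ^+ 2) ?sqrtr_sqr ?ger0_norm //; lra.
exists (acos A); split => //; apply/andP; split => //.
have [sp|sn] := leP 0 (asin B).
  have : acos (cos (asin B)) = asin B.
    by apply: cosK; rewrite in_itv /=; apply/andP; split => //; lra.
  by rewrite cs => ->.
have : acos (cos (asin B)) = - asin B by apply: cosKN; apply/andP; split; lra.
by rewrite cs => ->; lra.
Qed.

Lemma shift_angle_2pi (u0 v0 : R) : -pi <= u0 <= pi -> -pi <= v0 <= pi ->
  exists u, cos u = cos u0 /\ sin u = sin u0 /\ 0 <= v0 - u < 2 * pi.
Proof.
move=> /andP [hu1 hu2] /andP [hv1 hv2].
have e2 : pi *+ 2 = 2 * pi :> R by rewrite mulr_natl.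
have p0 := pi_gt0 R.
have [dn|dp] := ltP (v0 - u0) 0.
  exists (u0 - pi *+ 2).
  have k : u0 = (u0 - pi *+ 2) + pi *+ 2 by rewrite subrK.
  split; first by rewrite {2}k cosD2pi.
  split; first by rewrite {2}k sinD2pi.
  by rewrite e2; apply/andP; split; lra.
have [dl|dg] := ltP (v0 - u0) (2 * pi).
  by exists u0; split => //; split => //; apply/andP; split.
exists (u0 + pi *+ 2); rewrite cosD2pi sinD2pi; split => //; split => //.
by rewrite e2; apply/andP; split; lra.
Qed.

Lemma euler_expand (a b c : R) : euler a b c =
  (Complex (cos (a / 2) * (cos (b / 2) * cos (c / 2) + sin (b / 2) * sin (c / 2)))
           (sin (a / 2) * (sin (b / 2) * cos (c / 2) + cos (b / 2) * sin (c / 2))),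
   Complex (sin (a / 2) * (cos (b / 2) * cos (c / 2) - sin (b / 2) * sin (c / 2)))
           (cos (a / 2) * (cos (b / 2) * sin (c / 2) - sin (b / 2) * cos (c / 2)))).
Proof.
rewrite /euler /exp_p2 /exp_p1 /su2_mul mulNr cosN sinN /=.
by congr (_, _); apply: complexP => /=; ring.
Qed.

Lemma euler_diff_sum (a u v : R) : euler a (v - u) (u + v) =
  (Complex (cos (a / 2) * cos u) (sin (a / 2) * sin v),
   Complex (sin (a / 2) * cos v) (cos (a / 2) * sin u)).
Proof.
rewrite euler_expand.
have hu : u = (u + v) / 2 - (v - u) / 2 by field.
have hv : v = (u + v) / 2 + (v - u) / 2 by field.
set x := (u + v) / 2 in hu hv *; set y := (v - u) / 2 in hu hv *.
rewrite [in cos u]hu [in sin u]hu [in cos v]hv [in sin v]hv cosB sinB cosD sinD.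
by congr (_, _); apply: complexP => /=; ring.
Qed.

(* By euler_diff_sum, (Re α, Im β) and (Re β, Im α) must be the polar forms of
   cos(a/2) e^{iu} and sin(a/2) e^{iv}. *)
Lemma euler_surjective (g : S3) :
  exists a b c, euler_param a b c /\ su2_coords g = euler a b c.
Proof.
have hg := sphere3P g; rewrite /su2_coords /cx1 /cx2.
move: (set_val g) hg => [[X1 Y1] [X2 Y2]]; rewrite /sqnorm4 /= => hg.
pose A := Num.sqrt (X1 ^+ 2 + Y2 ^+ 2); pose B := Num.sqrt (X2 ^+ 2 + Y1 ^+ 2).
have A0 : 0 <= A := sqrtr_ge0 _.
have B0 : 0 <= B := sqrtr_ge0 _.
have hA : A ^+ 2 = X1 ^+ 2 + Y2 ^+ 2 by rewrite sqr_sqrtr // addr_ge0 // sqr_ge0.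
have hB : B ^+ 2 = X2 ^+ 2 + Y1 ^+ 2 by rewrite sqr_sqrtr // addr_ge0 // sqr_ge0.
have [u0 [hu0 [ex1 ey2]]] := polar_coords A0 (esym hA).
have [v0 [hv0 [ex2 ey1]]] := polar_coords B0 (esym hB).
have [t [/andP [t0 t1] [ct st]]] : exists t, 0 <= t <= pi / 2 /\ cos t = A /\ sin t = B.
  by apply: cos_sin_first_quadrant => //; rewrite hA hB; lra.
have [u [cu [su hb]]] := shift_angle_2pi hu0 hv0.
exists (2 * t), (v0 - u), (u + v0); split.
  by split => //; apply/andP; split; lra.
rewrite euler_diff_sum (_ : 2 * t / 2 = t); last by field.
by rewrite ct st cu su -ex1 -ey2 -ex2 -ey1.
Qed.

Lemma approx_shift_piS g : Defs.approx (shift_piS g) g.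
Proof.
have [a [b [c [abc eg]]]] := euler_surjective g.
exists a, b, (c + pi), a, b, c; split => //.
- by rewrite su2_coords_shift_piS eg euler_shift_pi.
- by split=> //; exists 1; rewrite addrAC subrr add0r mul1r.
Qed.

Lemma approxP g h :
  Defs.approx g h -> exists n, g = iter n shift_piS h \/ h = iter n shift_piS g.
Proof.
move=> [a [b [c1 [a2 [b2 [c2 [_ _ eg eh [ea eb [k ek]]]]]]]]]; subst a2 b2.
have shift_n n (u v : S3) c d : su2_coords u = euler a b c ->
    su2_coords v = euler a b d -> c = d + n%:R * pi -> u = iter n shift_piS v.
  move=> eu ev cd; apply: su2_coords_inj.
  by rewrite (iter_conj su2_coords_shift_piS) eu ev cd euler_shift_npi.
case: k ek => n ek.
  by exists n; left; apply: shift_n eg eh _; rewrite -ek addrC subrK.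
exists n.+1; right; apply: shift_n eh eg _.
have ek' : c2 - c1 = n.+1%:R * pi by rewrite -opprB ek -mulNr -intrN.
by rewrite -ek' addrC subrK.
Qed.

End Sphere.

Theorem proposition2 (R : realType) :
  homeomorphic (SU2_mod_approx R) (lens_space R 4 1).
Proof.
apply: (homeomorphic_quot (@continuous_to_lensS R) (@continuous_of_lensS R)
          (@to_lensSK R) (@of_lensSK R)).
- move=> g h /approxP[n [->|->]]; rewrite (iter_conj (@to_lensS_shift_pi R)).
    exact: eqclos_of (lens_rel_iter_mul_iS _ _).
  exact: eqclos_sym (eqclos_of (lens_rel_iter_mul_iS _ _)).
- move=> u v /lens_relP[n ->]; rewrite (iter_conj (@of_lensS_mul_i R)).
  exact: eqclos_iter (@approx_shift_piS R) _ _.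
Qed.
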